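(* For every $r\in(0,1/2)$ there is an integer $N\ge2$ with the following property. Let $\langle p_i/q_i\rangle_{i=1}^\infty$ belong to $\mathcal{QG}_N$, with expansions $p_i/q_i=[\langle b_{i,j}:\varepsilon_{i,j}\rangle_{j=1}^{m_i}]$, and define $k_1=1$ and $k_n=\prod_{i=1}^{n-1}q_{i,m_i}$ for $n\ge2$. Then for every $i\ge1$ and every $z\in\mathbb{C}$ with \[\left|z-\Big(\frac{p_i}{q_i}-i\,\frac{k_i}{q_i}\,\frac{\log 2}{2\pi}\Big)\right|\le\frac{\log2}{2\pi}\,\frac{k_i}{q_i}\] (where $i$ inside the parentheses denotes $\sqrt{-1}$), we have: (a) for every integer $n_i$ with $0\le n_i\le m_i-2$, $|G^{\circ n_i}(z)|\le r$, and $\arg G^{\circ n_i}(z)\in[-\pi/4,\pi/4]$ if $\operatorname{Re}G^{\circ n_i}(z)>0$, $\arg G^{\circ n_i}(z)\in[3\pi/4,5\pi/4]$ if $\operatorname{Re}G^{\circ n_i}(z)<0$; (b) $|G^{\circ(m_i-1)}(z)|\le r$.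
   Context: For $x\in\mathbb{R}$, $[x]$ is the closest integer to $x$ with the convention $x\in([x]-1/2,[x]+1/2]$ for $x>0$, $x\in[[x]-1/2,[x]+1/2)$ for $x<0$, $[0]=0$. $G(z)=-1/z-[\operatorname{Re}(-1/z)]$ for $z\ne0$. For integers $b_j\ge2$ and signs $\varepsilon_j$, $[\langle b_j:\varepsilon_j\rangle_{j=1}^m]=\cfrac{\varepsilon_1}{b_1+\cfrac{\varepsilon_2}{\ddots+\cfrac{\varepsilon_m}{b_m}}}$. For a nonzero rational $x\in[-1/2,1/2]$: set $x_1=x$, $x_{k+1}=-1/x_k-[-1/x_k]$ until $x_{m+1}=0$; $b_k=|[-1/x_k]|$, $\varepsilon_1=\operatorname{sign}(x_1)$, $\varepsilon_k=-\operatorname{sign}(x_{k-1})\operatorname{sign}(x_k)$ ($k\ge2$); then $x=[\langle b_k:\varepsilon_k\rangle_{k=1}^m]$ (its modified continued fraction expansion). For a sequence of nonzero rationals $p_i/q_i\in(-1/2,1/2]$ (lowest terms, $q_i>0$), let $p_i/q_i=[\langle b_{i,j}:\varepsilon_{i,j}\rangle_{j=1}^{m_i}]$ be this expansion and $q_{i,l}>0$ the denominator in lowest terms of $[\langle b_{i,j}:\varepsilon_{i,j}\rangle_{j=1}^l]$ (so $q_{i,m_i}=q_i$). For $N\ge2$, $\mathcal{QG}_N$ is the set of such sequences satisfying $b_{1,1}\ge N$, $b_{i+1,1}\ge q_{i,m_i}^2$ for all $i\ge1$, and $b_{i,j+1}\ge b_{i,j}^2$ for all $i\ge1$, $1\le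 j\le m_i-1$. *)

From Stdlib Require Export Reals QArith List.
From Coquelicot Require Export Coquelicot.

(** Floor and ceiling on R, via Stdlib's [up] (up y is the least integer > y). *)
Definition Zfloor (y : R) : Z := (up y - 1)%Z.
Definition Zceil (y : R) : Z := (- Zfloor (- y))%Z.

(** The closest integer [x] with the paper's tie-breaking convention:
    x in ([x]-1/2, [x]+1/2] for x > 0, x in [[x]-1/2, [x]+1/2) for x < 0, [0]=0. *)
Definition nint (x : R) : Z :=
  if Rlt_dec 0 x then Zceil (x - /2)
  else if Rlt_dec x 0 then Zfloor (x + /2)
  else 0%Z.

(** G(z) = -1/z - [Re(-1/z)].  (At z = 0 Coquelicot's Cinv gives 0 since
    Stdlib has / 0 = 0, so G 0 = 0; the paper leaves G(0) undefined.) *)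
Definition G (z : C) : C :=
  let w := Copp (Cinv z) in Cminus w (RtoC (IZR (nint (Re w)))).

Definition Giter (n : nat) (z : C) : C := Nat.iter n G z.

(** "arg w lies in [a,b]": some value of the (multivalued) argument of w lies in [a,b]. *)
Definition arg_in (w : C) (a b : R) : Prop :=
  exists t : R, (a <= t <= b)%R /\ w = Cmult (RtoC (Cmod w)) (cos t, sin t).

Definition nintQ (x : Q) : Z := nint (Q2R x).

Definition mcf_step (x : Q) : Q := ((- / x) - inject_Z (nintQ (- / x)))%Q.

(** x_k (1-indexed): x_1 = x. *)
Definition mcf_x (x : Q) (k : nat) : Q := Nat.iter (k - 1) mcf_step x.

Definition mcf_b (x : Q) (k : nat) : Z := Z.abs (nintQ (- / mcf_x x k)%Q).

Definition Qsign (y : Q) : Z := Z.sgn (Qnum y).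

Definition mcf_eps (x : Q) (k : nat) : Z :=
  if (k <=? 1)%nat then Qsign (mcf_x x 1)
  else (- (Qsign (mcf_x x (k - 1)) * Qsign (mcf_x x k)))%Z.

Definition mcf_len (x : Q) (m : nat) : Prop :=
  (1 <= m)%nat /\
  (forall k, (1 <= k <= m)%nat -> ~ (mcf_x x k == 0)%Q) /\
  (mcf_x x (m + 1) == 0)%Q.

(** [<b_j : eps_j>_{j=1}^l] = eps_1/(b_1 + eps_2/(b_2 + ... + eps_l/b_l)). *)
Definition mcf_trunc (x : Q) (l : nat) : Q :=
  fold_right (fun j acc => (inject_Z (mcf_eps x j) / (inject_Z (mcf_b x j) + acc))%Q)
             0%Q (seq 1 l).

Definition mcf_q (x : Q) (l : nat) : Z := Zpos (Qden (Qred (mcf_trunc x l))).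

(** ---- The class QG_N.  The sequence p_i/q_i is indexed by i >= 1
    (values at index 0 are irrelevant); m i is the length m_i of the
    expansion of p_i/q_i. ---- *)
Definition ratQ (p q : nat -> Z) (i : nat) : Q := p i # Z.to_pos (q i).

Definition in_QG (N : Z) (p q : nat -> Z) (m : nat -> nat) : Prop :=
  (forall i, (1 <= i)%nat ->
     (0 < q i)%Z /\ Z.gcd (p i) (q i) = 1%Z /\ p i <> 0%Z /\
     (- (1 # 2) < ratQ p q i <= 1 # 2)%Q /\
     mcf_len (ratQ p q i) (m i)) /\
  (N <= mcf_b (ratQ p q 1) 1)%Z /\
  (forall i, (1 <= i)%nat ->
     (mcf_q (ratQ p q i) (m i) ^ 2 <= mcf_b (ratQ p q (S i)) 1)%Z) /\
  (forall i j, (1 <= i)%nat -> (1 <= j <= m i - 1)%nat ->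
     (mcf_b (ratQ p q i) j ^ 2 <= mcf_b (ratQ p q i) (S j))%Z).

Definition kseq (p q : nat -> Z) (m : nat -> nat) (n : nat) : Z :=
  fold_right (fun i acc => (mcf_q (ratQ p q i) (m i) * acc)%Z) 1%Z (seq 1 (n - 1)).

(* Write D(a, rho) for the closed disk of radius rho tangent to the real axis at a from
   below.  The map w |-> -1/w sends D(a, rho) onto D(-1/a, rho/a^2), so as long as the
   disks stay away from the half-integers, G maps D(x_k, rho) onto D(x_(k+1), rho/x_k^2),
   where x_k are the remainders of the modified continued fraction of p_i/q_i.  Since
   |x_k| = den_(k+1)/den_k, the n-th image of the initial disk has radius
   c k_i q_i / den_(n+1)^2.  The growth conditions of QG_N give b_(i,1) >= N k_i and
   b_(i,j+1) >= b_(i,j)^2, which bound this radius by 4/N, and by |x_(n+1)|/4 before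
   the last step; hence |G^n(z)| <= 10/N <= r, and G^n(z) lies in the cone
   |Im| <= |Re|, which is the argument condition. *)

From Stdlib Require Import Qreals Lra Lia Psatz.
Open Scope R_scope.

Lemma Zfloor_spec y : IZR (Zfloor y) <= y < IZR (Zfloor y) + 1.
Proof.
  unfold Zfloor. destruct (archimed y) as [H1 H2].
  rewrite minus_IZR. simpl. lra.
Qed.

Lemma Zfloor_unique y n : IZR n <= y < IZR n + 1 -> Zfloor y = n.
Proof.
  intros [H1 H2]. unfold Zfloor.
  assert (E : (n + 1)%Z = up y) by (apply tech_up; rewrite plus_IZR; simpl; lra).
  rewrite <- E. lia.
Qed.

Lemma nint_add_small A t : Rabs t < /2 -> nint (IZR A + t) = A.
Proof.
  intros Ht. apply Rabs_def2 in Ht. destruct Ht as [Ht1 Ht2].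
  unfold nint. destruct (Rlt_dec 0 (IZR A + t)).
  - unfold Zceil. rewrite (Zfloor_unique _ (- A)); [lia|].
    rewrite opp_IZR. lra.
  - destruct (Rlt_dec (IZR A + t) 0).
    + apply Zfloor_unique. lra.
    + assert (HA : -1 < IZR A < 1) by lra.
      destruct HA as [HA1 HA2]. apply lt_IZR in HA1, HA2. lia.
Qed.

Lemma Rabs_sub_nint_le y : Rabs (y - IZR (nint y)) <= /2.
Proof.
  unfold nint. destruct (Rlt_dec 0 y).
  - unfold Zceil. pose proof (Zfloor_spec (- (y - /2))).
    rewrite opp_IZR. apply Rabs_le. lra.
  - destruct (Rlt_dec y 0).
    + pose proof (Zfloor_spec (y + /2)). apply Rabs_le. lra.
    + assert (y = 0) by lra. subst. rewrite Rminus_0_r, Rabs_R0. lra.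
Qed.

Definition tangent_disk (a rho : R) (w : C) : Prop :=
  (Re w - a) * (Re w - a) + (Im w + rho) * (Im w + rho) <= rho * rho.

Lemma Cmod_le_tangent_disk z a rho :
  Cmod (Cminus z (a, - rho)) <= rho -> tangent_disk a rho z.
Proof.
  destruct z as [x y]. unfold Cmod, Cminus, Cplus, Copp, tangent_disk; simpl.
  intros Hz.
  replace ((x + - a) * ((x + - a) * 1) + (y + - - rho) * ((y + - - rho) * 1))
    with ((x - a) * (x - a) + (y + rho) * (y + rho)) in Hz by ring.
  set (s := (x - a) * (x - a) + (y + rho) * (y + rho)) in Hz.
  assert (Hs : 0 <= s) by (unfold s; pose proof (Rle_0_sqr (x - a)); pose proof (Rle_0_sqr (y + rho)); unfold Rsqr in *; lra).
  assert (Hrho : 0 <= rho) by (eapply Rle_trans; [apply sqrt_pos | exact Hz]).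
  assert (Hsq : sqrt s * sqrt s <= rho * rho) by (apply Rmult_le_compat; auto using sqrt_pos).
  rewrite sqrt_sqrt in Hsq by exact Hs. unfold s in Hsq. lra.
Qed.

Section TangentDisk.
Variables (a rho : R) (w : C).
Hypotheses (Hrho : 0 <= rho) (Hw : tangent_disk a rho w).

Lemma tangent_disk_Re : Rabs (Re w - a) <= rho.
Proof.
  unfold tangent_disk in Hw.
  assert (Hsq : (Re w - a) * (Re w - a) <= rho * rho)
    by (pose proof (Rle_0_sqr (Im w + rho)); unfold Rsqr in *; lra).
  apply Rabs_le. split; nra.
Qed.

Lemma tangent_disk_Im : -2 * rho <= Im w <= 0.
Proof.
  unfold tangent_disk in Hw.
  assert (Hsq : (Im w + rho) * (Im w + rho) <= rho * rho)
    by (pose proof (Rle_0_sqr (Re w - a)); unfold Rsqr in *; lra).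
  split; nra.
Qed.

Lemma tangent_disk_Cmod : Cmod w <= Rabs a + 2 * rho.
Proof.
  pose proof tangent_disk_Re as HR. pose proof tangent_disk_Im as HI.
  unfold tangent_disk in Hw. destruct w as [x y]. unfold Cmod, Re, Im in *; simpl in *.
  rewrite <- (sqrt_Rsqr (Rabs a + 2 * rho)) by (pose proof (Rabs_pos a); lra).
  apply sqrt_le_1_alt. unfold Rsqr.
  assert (Hax : a * (x - a) <= Rabs a * rho).
  { apply Rle_trans with (Rabs (a * (x - a))); [apply Rle_abs|].
    rewrite Rabs_mult. apply Rmult_le_compat_l; [apply Rabs_pos | lra]. }
  assert (Haa : a * a = Rabs a * Rabs a) by (rewrite <- Rabs_mult; symmetry; apply Rabs_right; nra).
  assert ((x - a) * (x - a) + y * y <= 4 * rho * rho) by nra.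
  replace (x * (x * 1) + y * (y * 1))
    with ((x - a) * (x - a) + y * y + 2 * (a * (x - a)) + a * a) by ring.
  replace ((Rabs a + 2 * rho) * (Rabs a + 2 * rho))
    with (4 * rho * rho + 4 * (Rabs a * rho) + Rabs a * Rabs a) by ring.
  pose proof (Rmult_le_pos _ _ (Rabs_pos a) Hrho). lra.
Qed.

Lemma tangent_disk_cone : a <> 0 -> rho <= Rabs a / 4 -> Re w <> 0 /\ Rabs (Im w) <= Rabs (Re w).
Proof.
  intros Ha Hra. pose proof tangent_disk_Re as HR. pose proof tangent_disk_Im as HI.
  assert (Hx : Rabs a - Rabs (Re w) <= rho).
  { pose proof (Rabs_triang_inv a (Re w)). rewrite Rabs_minus_sym in HR. lra. }
  assert (Hy : Rabs (Im w) <= 2 * rho) by (apply Rabs_le; lra).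
  pose proof (Rabs_pos_lt a Ha). split.
  - intro E. rewrite E, Rabs_R0 in Hx. lra.
  - lra.
Qed.

End TangentDisk.

Lemma tangent_disk_Copp_Cinv a rho w : a <> 0 -> tangent_disk a rho w ->
  tangent_disk (- / a) (rho / (a * a)) (Copp (Cinv w)).
Proof.
  destruct w as [x y]. unfold tangent_disk, Re, Im; simpl. intros Ha Hw.
  assert (Ha2 : 0 < a * a) by nra.
  assert (Hs : 0 < x * x + y * y).
  { destruct (Rle_lt_dec (x * x + y * y) 0) as [H0 | H0]; [|exact H0].
    assert (x = 0) by nra. assert (y = 0) by nra. subst. nra. }
  replace (x * (x * 1) + y * (y * 1)) with (x * x + y * y) by ring.
  set (s := x * x + y * y) in *.
  (* Inversion rescales the defining inequality by the positive factor [1 / (a² s)]. *)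
  assert (Key : (- (x / s) - - / a) * (- (x / s) - - / a)
                + (- (- y / s) + rho / (a * a)) * (- (- y / s) + rho / (a * a))
                - rho / (a * a) * (rho / (a * a))
              = ((x - a) * (x - a) + (y + rho) * (y + rho) - rho * rho) / (a * a * s)).
  { unfold s. field. split; [unfold s in Hs; lra | lra]. }
  assert (Hneg : ((x - a) * (x - a) + (y + rho) * (y + rho) - rho * rho) / (a * a * s) <= 0).
  { unfold Rdiv. apply Rmult_le_0_r; [lra|]. left. apply Rinv_0_lt_compat. nra. }
  lra.
Qed.

Lemma tangent_disk_sub_real a rho u t :
  tangent_disk a rho u -> tangent_disk (a - t) rho (Cminus u (RtoC t)).
Proof.
  destruct u as [x y]. unfold tangent_disk, Re, Im, Cminus, Cplus, Copp, RtoC; simpl.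
  replace (x + - t - (a - t)) with (x - a) by ring.
  replace (y + - 0 + rho) with (y + rho) by ring. auto.
Qed.

(* The smallness hypothesis keeps the image disk inside the strip on which [nint] is constant. *)
Lemma G_tangent_disk a rho w :
  a <> 0 -> 0 <= rho -> tangent_disk a rho w ->
  Rabs (- / a - IZR (nint (- / a))) + rho / (a * a) < /2 ->
  tangent_disk (- / a - IZR (nint (- / a))) (rho / (a * a)) (G w).
Proof.
  intros Ha Hrho Hw Hsmall.
  set (A := nint (- / a)) in *.
  assert (Hrho' : 0 <= rho / (a * a)).
  { apply Rmult_le_pos; [exact Hrho | left; apply Rinv_0_lt_compat; nra]. }
  pose proof (tangent_disk_Copp_Cinv a rho w Ha Hw) as Hu.
  pose proof (tangent_disk_Re _ _ _ Hrho' Hu) as Hre.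
  assert (HA : nint (Re (Copp (Cinv w))) = A).
  { replace (Re (Copp (Cinv w)))
      with (IZR A + ((Re (Copp (Cinv w)) - - / a) + (- / a - IZR A))) by ring.
    apply nint_add_small. eapply Rle_lt_trans; [apply Rabs_triang | lra]. }
  unfold G. rewrite HA. apply tangent_disk_sub_real. exact Hu.
Qed.

Lemma atan_le x y : x <= y -> atan x <= atan y.
Proof.
  intros H. destruct (Rle_lt_or_eq_dec _ _ H) as [Hlt | ->].
  - left. apply atan_increasing, Hlt.
  - right. reflexivity.
Qed.

Lemma arg_in_cone w : Re w <> 0 -> Rabs (Im w) <= Rabs (Re w) ->
  (0 < Re w -> arg_in w (- (PI / 4)) (PI / 4)) /\
  (Re w < 0 -> arg_in w (3 * PI / 4) (5 * PI / 4)).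
Proof.
  destruct w as [x y]. unfold Re, Im; simpl. intros Hx Hy.
  set (u := y / x).
  assert (Hu : -1 <= u <= 1).
  { apply Rabs_le_between. unfold u, Rdiv. rewrite Rabs_mult, Rabs_inv.
    pose proof (Rabs_pos_lt x Hx).
    apply Rmult_le_reg_r with (Rabs x); [lra|].
    rewrite Rmult_assoc, Rinv_l, Rmult_1_l, Rmult_1_r by lra. exact Hy. }
  assert (Hat : - (PI / 4) <= atan u <= PI / 4).
  { rewrite <- atan_1, <- atan_opp. split; apply atan_le; lra. }
  assert (Hsq : 0 < sqrt (1 + u²)).
  { apply sqrt_lt_R0. pose proof (Rle_0_sqr u). lra. }
  assert (Hmod : Cmod (x, y) = Rabs x * sqrt (1 + u²)).
  { unfold Cmod; simpl. rewrite <- (sqrt_Rsqr (Rabs x)) by apply Rabs_pos.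
    rewrite <- sqrt_mult by (pose proof (Rle_0_sqr u); unfold Rsqr in *; nra).
    f_equal. rewrite <- Rsqr_abs. unfold u, Rsqr. field. exact Hx. }
  assert (Hux : y = u * x) by (unfold u; field; exact Hx).
  split; intro Hs.
  - exists (atan u). split; [exact Hat|].
    rewrite Hmod, cos_atan, sin_atan, Rabs_right by lra.
    unfold Cmult, RtoC; simpl.
    apply injective_projections; simpl; [field; lra | rewrite Hux at 1; field; lra].
  - exists (atan u + PI). split; [lra|].
    rewrite Hmod, neg_cos, neg_sin, cos_atan, sin_atan, Rabs_left by lra.
    unfold Cmult, RtoC; simpl.
    apply injective_projections; simpl; [field; lra | rewrite Hux at 1; field; lra].
Qed.

Lemma mcf_x_S x k : (1 <= k)%nat -> mcf_x x (S k) = mcf_step (mcf_x x k).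
Proof. intros H. unfold mcf_x. destruct k; [lia|]. simpl. rewrite Nat.sub_0_r. reflexivity. Qed.

Lemma Q2R_inject_Z z : Q2R (inject_Z z) = IZR z.
Proof. unfold Q2R, inject_Z. simpl. field. Qed.

Lemma Q2R_neq0 y : ~ (y == 0)%Q -> Q2R y <> 0.
Proof. intros H E. apply H, eqR_Qeq. rewrite E. unfold Q2R; simpl; field. Qed.

Lemma Qneq0_Q2R y : Q2R y <> 0 -> ~ (y == 0)%Q.
Proof. intros H E. apply H. apply Qeq_eqR in E. rewrite E. unfold Q2R; simpl; field. Qed.

Lemma Q2R_mcf_step y : ~ (y == 0)%Q ->
  Q2R (mcf_step y) = - / Q2R y - IZR (nint (- / Q2R y)).
Proof.
  intros H. unfold mcf_step, nintQ.
  rewrite Q2R_minus, Q2R_opp, Q2R_inv, Q2R_inject_Z by exact H. reflexivity.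
Qed.

Lemma Qden_mcf_step y : ~ (y == 0)%Q -> Zpos (Qden (mcf_step y)) = Z.abs (Qnum y).
Proof.
  intros H. destruct y as [[|n|n] d]; unfold mcf_step; simpl.
  - exfalso. apply H. reflexivity.
  - rewrite Pos.mul_1_r. reflexivity.
  - rewrite Pos.mul_1_r. reflexivity.
Qed.

Lemma Rabs_Q2R y : Rabs (Q2R y) = IZR (Z.abs (Qnum y)) / IZR (Zpos (Qden y)).
Proof.
  unfold Q2R. rewrite Rabs_mult, Rabs_inv, abs_IZR, (Rabs_right (IZR (Zpos _))); [reflexivity|].
  apply Rle_ge, IZR_le. lia.
Qed.

Lemma Qsign_mul_Rabs y : IZR (Qsign y) * Rabs (Q2R y) = Q2R y.
Proof.
  rewrite Rabs_Q2R. unfold Qsign, Q2R. destruct y as [[|n|n] d]; simpl; unfold Rdiv; try ring.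
  rewrite <- (Pos2Z.opp_pos n), (opp_IZR (Z.pos n)). ring.
Qed.

Definition mcf_xR (x : Q) (k : nat) : R := Q2R (mcf_x x k).

(* Denominator of the unreduced [mcf_x x k]. *)
Definition mcf_den (x : Q) (k : nat) : R := IZR (Zpos (Qden (mcf_x x k))).

Definition mcf_bR (x : Q) (k : nat) : R := IZR (mcf_b x k).

Definition mcf_tail (x : Q) (s l : nat) : Q :=
  fold_right (fun j acc => (inject_Z (mcf_eps x j) / (inject_Z (mcf_b x j) + acc))%Q)
             0%Q (seq s l).

Lemma mcf_den_ge1 x k : 1 <= mcf_den x k.
Proof. unfold mcf_den. apply IZR_le. lia. Qed.

Lemma mcf_eps_S_mul_Rabs x s : (1 <= s)%nat ->
  IZR (mcf_eps x (S s)) * Rabs (mcf_xR x (S s)) = - IZR (Qsign (mcf_x x s)) * mcf_xR x (S s).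
Proof.
  intros Hs. unfold mcf_eps. destruct s as [|s]; [lia|].
  replace (S (S s) <=? 1)%nat with false by reflexivity.
  replace (S (S s) - 1)%nat with (S s) by lia.
  rewrite opp_IZR, mult_IZR. unfold mcf_xR.
  rewrite <- (Qsign_mul_Rabs (mcf_x x (S (S s)))) at 2. ring.
Qed.

Section Expansion.
Variables (x : Q) (m : nat).
Hypotheses (Hx : -/2 < Q2R x <= /2) (Hlen : mcf_len x m).

Lemma mcf_x_neq0 k : (1 <= k <= m)%nat -> ~ (mcf_x x k == 0)%Q.
Proof. destruct Hlen as [_ [H _]]. auto. Qed.

Lemma mcf_xR_neq0 k : (1 <= k <= m)%nat -> mcf_xR x k <> 0.
Proof. intros H. apply Q2R_neq0, mcf_x_neq0, H. Qed.

Lemma mcf_xR_last : mcf_xR x (S m) = 0.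
Proof.
  destruct Hlen as [_ [_ H]]. unfold mcf_xR. rewrite <- Nat.add_1_r.
  apply Qeq_eqR in H. rewrite H. unfold Q2R; simpl; field.
Qed.

Lemma mcf_xR_S k : (1 <= k <= m)%nat ->
  mcf_xR x (S k) = - / mcf_xR x k - IZR (nint (- / mcf_xR x k)).
Proof. intros H. unfold mcf_xR. rewrite mcf_x_S by lia. apply Q2R_mcf_step, mcf_x_neq0, H. Qed.

Lemma mcf_b_nint k : (1 <= k <= m)%nat -> mcf_b x k = Z.abs (nint (- / mcf_xR x k)).
Proof.
  intros H. unfold mcf_b, nintQ, mcf_xR.
  rewrite Q2R_opp, Q2R_inv by (apply mcf_x_neq0, H). reflexivity.
Qed.

Lemma Rabs_mcf_xR_le k : (1 <= k <= S m)%nat -> Rabs (mcf_xR x k) <= /2.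
Proof.
  intros H. destruct k as [|[|k]]; [lia| |].
  - apply Rabs_le. unfold mcf_xR. change (mcf_x x 1) with x. lra.
  - rewrite mcf_xR_S by lia. apply Rabs_sub_nint_le.
Qed.

Lemma mcf_bR_bounds k : (1 <= k <= m)%nat ->
  mcf_bR x k - /2 <= / Rabs (mcf_xR x k) <= mcf_bR x k + /2.
Proof.
  intros H. unfold mcf_bR. rewrite mcf_b_nint, abs_IZR by exact H.
  set (A := IZR (nint (- / mcf_xR x k))).
  assert (E : / Rabs (mcf_xR x k) = Rabs (A + mcf_xR x (S k))).
  { rewrite mcf_xR_S by exact H. unfold A.
    rewrite <- Rabs_inv, <- Rabs_Ropp. f_equal. ring. }
  rewrite E. pose proof (Rabs_mcf_xR_le (S k) ltac:(lia)).
  pose proof (Rabs_triang A (mcf_xR x (S k))).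
  pose proof (Rabs_triang_inv A (- mcf_xR x (S k))).
  replace (A - - mcf_xR x (S k)) with (A + mcf_xR x (S k)) in * by ring.
  rewrite Rabs_Ropp in *. lra.
Qed.

Lemma Rabs_mcf_xR k : (1 <= k <= m)%nat -> Rabs (mcf_xR x k) = mcf_den x (S k) / mcf_den x k.
Proof.
  intros H. unfold mcf_xR, mcf_den. rewrite Rabs_Q2R, mcf_x_S by lia.
  rewrite Qden_mcf_step by (apply mcf_x_neq0, H). reflexivity.
Qed.

Lemma mcf_den_bounds k : (1 <= k <= m)%nat ->
  mcf_den x (S k) * (mcf_bR x k - /2) <= mcf_den x k <= mcf_den x (S k) * (mcf_bR x k + /2).
Proof.
  intros H. pose proof (mcf_bR_bounds k H) as HB. rewrite Rabs_mcf_xR in HB by exact H.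
  pose proof (mcf_den_ge1 x k). pose proof (mcf_den_ge1 x (S k)).
  replace (/ (mcf_den x (S k) / mcf_den x k)) with (mcf_den x k / mcf_den x (S k)) in HB
    by (field; lra).
  destruct HB as [HB1 HB2].
  split; apply Rmult_le_reg_r with (/ mcf_den x (S k)); try (apply Rinv_0_lt_compat; lra);
    [replace (mcf_den x (S k) * (mcf_bR x k - /2) * / mcf_den x (S k)) with (mcf_bR x k - /2)
     | replace (mcf_den x (S k) * (mcf_bR x k + /2) * / mcf_den x (S k)) with (mcf_bR x k + /2)];
    solve [field; lra | exact HB1 | exact HB2].
Qed.

(* Since [|x_k| <= 1/2], the integer [nint (-1/x_k)] has the sign of [-1/x_k]. *)
Lemma mcf_sign_rel k : (1 <= k <= m)%nat ->
  mcf_bR x k - IZR (Qsign (mcf_x x k)) * mcf_xR x (S k) = / Rabs (mcf_xR x k).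
Proof.
  intros H. pose proof (Qsign_mul_Rabs (mcf_x x k)) as Hs. fold (mcf_xR x k) in Hs.
  pose proof (mcf_xR_neq0 k H) as Hnz. pose proof (Rabs_mcf_xR_le k ltac:(lia)) as Hk.
  pose proof (Rabs_mcf_xR_le (S k) ltac:(lia)) as Hk1.
  unfold mcf_bR. rewrite mcf_b_nint, abs_IZR by exact H. rewrite (mcf_xR_S k H) in *.
  set (y := mcf_xR x k) in *. set (A := IZR (nint (- / y))) in *.
  apply Rabs_le_between in Hk1.
  destruct (Rlt_dec 0 y) as [Hp | Hn].
  - rewrite Rabs_right in Hs, Hk by lra.
    assert (Hsg : IZR (Qsign (mcf_x x k)) = 1) by (apply Rmult_eq_reg_r with y; lra).
    assert (Hinv : 2 <= / y).
    { apply Rmult_le_reg_r with y; [lra|]. rewrite Rinv_l by lra. lra. }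
    rewrite Hsg, (Rabs_right y), (Rabs_left A) by lra. lra.
  - rewrite Rabs_left in Hs, Hk by lra.
    assert (Hsg : IZR (Qsign (mcf_x x k)) = -1) by (apply Rmult_eq_reg_r with (- y); lra).
    assert (Hinv : 2 <= - / y).
    { apply Rmult_le_reg_r with (- y); [lra|].
      replace (- / y * - y) with (/ y * y) by ring. rewrite Rinv_l by lra. lra. }
    rewrite Hsg, (Rabs_left y), (Rabs_right A), Rinv_opp by lra. lra.
Qed.

Lemma Q2R_mcf_tail l : forall s, (1 <= s)%nat -> (s + l = S m)%nat ->
  Q2R (mcf_tail x s l) = IZR (mcf_eps x s) * Rabs (mcf_xR x s).
Proof.
  induction l as [|l IH]; intros s Hs Hsl.
  - replace s with (S m) by lia. rewrite mcf_xR_last, Rabs_R0.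
    unfold Q2R; simpl; field.
  - change (mcf_tail x s (S l))
      with (inject_Z (mcf_eps x s) / (inject_Z (mcf_b x s) + mcf_tail x (S s) l))%Q.
    assert (Hden : Q2R (inject_Z (mcf_b x s) + mcf_tail x (S s) l) = / Rabs (mcf_xR x s)).
    { rewrite Q2R_plus, Q2R_inject_Z, IH, mcf_eps_S_mul_Rabs by lia.
      rewrite <- mcf_sign_rel by lia. unfold mcf_bR. ring. }
    assert (Hnz : Rabs (mcf_xR x s) <> 0) by (apply Rabs_no_R0, mcf_xR_neq0; lia).
    rewrite Q2R_div, Hden, Q2R_inject_Z; [field; exact Hnz|].
    apply Qneq0_Q2R. rewrite Hden. apply Rinv_neq_0_compat, Hnz.
Qed.

Lemma mcf_trunc_len : (mcf_trunc x m == x)%Q.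
Proof.
  apply eqR_Qeq. change (mcf_trunc x m) with (mcf_tail x 1 m).
  destruct Hlen as [Hm _]. rewrite Q2R_mcf_tail by lia.
  exact (Qsign_mul_Rabs x).
Qed.

End Expansion.

(* Each application of [G] divides the radius by [x_j² = (den_(j+1) / den_j)²],
   so the image of the disk of radius [c k / q] after [n] steps has this radius. *)
Definition orbit_radius (x : Q) (c k : R) (n : nat) : R :=
  c * k * mcf_den x 1 / (mcf_den x (S n) * mcf_den x (S n)).

Section Orbit.
Variables (x : Q) (m : nat) (N k c : R).
Hypotheses (Hx : -/2 < Q2R x <= /2) (Hlen : mcf_len x m).
Hypotheses (HN : 64 <= N) (Hk : 1 <= k) (HNk : N * k <= mcf_bR x 1) (Hc : 0 < c <= 1).
Hypothesis Hgrow : forall j, (1 <= j)%nat -> (j + 1 <= m)%nat ->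
  mcf_bR x j * mcf_bR x j <= mcf_bR x (S j).

Let rho := orbit_radius x c k.

Lemma mcf_bR_ge_N j : (1 <= j <= m)%nat -> N <= mcf_bR x j.
Proof.
  induction j as [|[|j] IH]; intros H; [lia | nra |].
  assert (N <= mcf_bR x (S j)) by (apply IH; lia).
  pose proof (Hgrow (S j) ltac:(lia) ltac:(lia)). nra.
Qed.

Lemma Rabs_mcf_xR_le_N j : (1 <= j <= m)%nat -> Rabs (mcf_xR x j) <= 2 / N.
Proof.
  intros H. pose proof (mcf_bR_bounds x m Hx Hlen j H) as [Hb _].
  pose proof (mcf_bR_ge_N j H). pose proof (Rabs_pos_lt _ (mcf_xR_neq0 x m Hlen j H)).
  assert (Hinv : N / 2 <= / Rabs (mcf_xR x j)) by lra.
  apply Rinv_le_contravar in Hinv; [|apply Rdiv_lt_0_compat; lra].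
  rewrite Rinv_inv in Hinv. replace (2 / N) with (/ (N / 2)) by (field; lra). exact Hinv.
Qed.

Lemma mcf_bR_mul_Rabs_ge j : (1 <= j <= m)%nat -> 1 <= 2 * mcf_bR x j * Rabs (mcf_xR x j).
Proof.
  intros H. pose proof (mcf_bR_bounds x m Hx Hlen j H) as [_ Hb].
  pose proof (mcf_bR_ge_N j H). pose proof (Rabs_pos_lt _ (mcf_xR_neq0 x m Hlen j H)).
  replace 1 with (/ Rabs (mcf_xR x j) * Rabs (mcf_xR x j)) by (field; lra). nra.
Qed.

(* Telescoping [den_j <= den_(j+1) (b_j + 1/2)] against [b_(j+1) >= b_j²]. *)
Lemma mcf_den_first_le j : (1 <= j <= m)%nat ->
  mcf_bR x 1 * mcf_den x 1 <= (2 * mcf_bR x j - 2) * mcf_den x j.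
Proof.
  induction j as [|[|j] IH]; intros H; [lia| |].
  - pose proof (mcf_bR_ge_N 1 ltac:(lia)). pose proof (mcf_den_ge1 x 1). nra.
  - specialize (IH ltac:(lia)).
    pose proof (mcf_bR_ge_N (S j) ltac:(lia)).
    pose proof (mcf_den_bounds x m Hx Hlen (S j) ltac:(lia)) as [_ HD].
    pose proof (Hgrow (S j) ltac:(lia) ltac:(lia)).
    pose proof (mcf_den_ge1 x (S (S j))).
    assert ((2 * mcf_bR x (S j) - 2) * mcf_den x (S j)
            <= (2 * mcf_bR x (S j) - 2) * (mcf_den x (S (S j)) * (mcf_bR x (S j) + /2)))
      by (apply Rmult_le_compat_l; nra).
    nra.
Qed.

Lemma orbit_radius_nonneg n : 0 <= rho n.
Proof.
  unfold rho, orbit_radius. pose proof (mcf_den_ge1 x 1). pose proof (mcf_den_ge1 x (S n)).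
  apply Rdiv_le_0_compat; [apply Rmult_le_pos; nra | nra].
Qed.

Lemma orbit_radius_den n : (S n <= m)%nat ->
  N * rho n * mcf_den x (S n) <= c * (2 * mcf_bR x (S n) - 2).
Proof.
  intros H. pose proof (mcf_den_first_le (S n) ltac:(lia)).
  pose proof (mcf_den_ge1 x (S n)). pose proof (mcf_den_ge1 x 1).
  assert (Hmul : rho n * (mcf_den x (S n) * mcf_den x (S n)) = c * k * mcf_den x 1)
    by (unfold rho, orbit_radius; field; nra).
  assert (N * (c * k * mcf_den x 1) <= c * (mcf_bR x 1 * mcf_den x 1)).
  { replace (N * (c * k * mcf_den x 1)) with (c * mcf_den x 1 * (N * k)) by ring.
    replace (c * (mcf_bR x 1 * mcf_den x 1)) with (c * mcf_den x 1 * mcf_bR x 1) by ring.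
    apply Rmult_le_compat_l; nra. }
  apply Rmult_le_reg_r with (mcf_den x (S n)); [lra | nra].
Qed.

Lemma orbit_radius_le n : (S n <= m)%nat -> rho n <= 4 / N.
Proof.
  intros H. pose proof (orbit_radius_den n H).
  pose proof (mcf_bR_ge_N (S n) ltac:(lia)).
  pose proof (mcf_den_bounds x m Hx Hlen (S n) ltac:(lia)) as [HD _].
  pose proof (mcf_den_ge1 x (S (S n))). pose proof (orbit_radius_nonneg n).
  assert (mcf_bR x (S n) - /2 <= mcf_den x (S n)) by nra.
  assert (N * rho n * (mcf_bR x (S n) - /2) <= c * (2 * mcf_bR x (S n) - 2)).
  { apply Rle_trans with (N * rho n * mcf_den x (S n)); [|lra].
    apply Rmult_le_compat_l; nra. }
  assert (N * rho n <= 4) by nra.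
  apply Rmult_le_reg_l with N; [lra|].
  replace (N * (4 / N)) with 4 by (field; lra). lra.
Qed.

Lemma orbit_radius_mul_next n : (S (S n) <= m)%nat ->
  rho n * (N * mcf_bR x (S (S n))) <= 8.
Proof.
  intros H. pose proof (orbit_radius_den n ltac:(lia)).
  pose proof (mcf_bR_ge_N (S n) ltac:(lia)). pose proof (mcf_bR_ge_N (S (S n)) ltac:(lia)).
  pose proof (mcf_den_bounds x m Hx Hlen (S n) ltac:(lia)) as [HD _].
  pose proof (mcf_den_bounds x m Hx Hlen (S (S n)) ltac:(lia)) as [HD2 _].
  pose proof (mcf_den_ge1 x (S (S (S n)))). pose proof (orbit_radius_nonneg n).
  set (B1 := mcf_bR x (S n)) in *. set (B2 := mcf_bR x (S (S n))) in *.
  assert (B2 / 2 <= mcf_den x (S (S n))) by nra.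
  assert ((B1 - /2) * (B2 / 2) <= mcf_den x (S n)) by nra.
  assert (N * rho n * ((B1 - /2) * (B2 / 2)) <= c * (2 * B1 - 2)).
  { apply Rle_trans with (N * rho n * mcf_den x (S n)); [|lra].
    apply Rmult_le_compat_l; nra. }
  nra.
Qed.

Lemma orbit_radius_S n : (S n <= m)%nat ->
  rho n / (mcf_xR x (S n) * mcf_xR x (S n)) = rho (S n).
Proof.
  intros H.
  replace (mcf_xR x (S n) * mcf_xR x (S n)) with (Rabs (mcf_xR x (S n)) * Rabs (mcf_xR x (S n)))
    by (rewrite <- Rabs_mult; apply Rabs_right; nra).
  rewrite (Rabs_mcf_xR x m Hlen (S n)) by lia.
  unfold rho, orbit_radius. pose proof (mcf_den_ge1 x (S n)). pose proof (mcf_den_ge1 x (S (S n))).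
  field. lra.
Qed.

Lemma Giter_tangent_disk z : tangent_disk (mcf_xR x 1) (rho 0) z ->
  forall n, (S n <= m)%nat -> tangent_disk (mcf_xR x (S n)) (rho n) (Giter n z).
Proof.
  intros Hz. induction n as [|n IH]; intros H; [exact Hz|].
  change (Giter (S n) z) with (G (Giter n z)).
  rewrite <- orbit_radius_S, (mcf_xR_S x m Hlen (S n)) by lia.
  apply G_tangent_disk;
    [apply (mcf_xR_neq0 x m Hlen); lia | apply orbit_radius_nonneg | apply IH; lia |].
  rewrite <- (mcf_xR_S x m Hlen (S n)), orbit_radius_S by lia.
  pose proof (Rabs_mcf_xR_le_N (S (S n)) ltac:(lia)).
  pose proof (orbit_radius_le (S n) ltac:(lia)).
  assert (2 / N + 4 / N < /2).
  { apply Rmult_lt_reg_l with N; [lra|].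
    replace (N * (2 / N + 4 / N)) with 6 by (field; lra). lra. }
  lra.
Qed.

Section Iterates.
Variable z : C.
Hypothesis Hz : tangent_disk (mcf_xR x 1) (rho 0) z.

Lemma Giter_Cmod_le n : (S n <= m)%nat -> Cmod (Giter n z) <= 10 / N.
Proof.
  intros H.
  pose proof (tangent_disk_Cmod _ _ _ (orbit_radius_nonneg n) (Giter_tangent_disk z Hz n H)).
  pose proof (Rabs_mcf_xR_le_N (S n) ltac:(lia)). pose proof (orbit_radius_le n H).
  replace (10 / N) with (2 / N + 2 * (4 / N)) by (field; lra). lra.
Qed.

Lemma Giter_cone n : (S (S n) <= m)%nat ->
  Re (Giter n z) <> 0 /\ Rabs (Im (Giter n z)) <= Rabs (Re (Giter n z)).
Proof.
  intros H. apply tangent_disk_cone with (a := mcf_xR x (S n)) (rho := rho n);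
    [apply orbit_radius_nonneg | apply Giter_tangent_disk; [exact Hz | lia]
    | apply (mcf_xR_neq0 x m Hlen); lia |].
  pose proof (orbit_radius_mul_next n H). pose proof (orbit_radius_nonneg n).
  pose proof (mcf_bR_ge_N (S n) ltac:(lia)).
  pose proof (Hgrow (S n) ltac:(lia) ltac:(lia)).
  pose proof (mcf_bR_mul_Rabs_ge (S n) ltac:(lia)).
  set (B1 := mcf_bR x (S n)) in *. set (B2 := mcf_bR x (S (S n))) in *.
  set (r0 := rho n) in *.
  (* [r0 <= 8 / (N B1²) <= 1 / (8 B1) <= |x_(n+1)| / 4] *)
  assert (r0 * N * (B1 * B1) <= 8).
  { apply Rle_trans with (r0 * N * B2); [apply Rmult_le_compat_l; nra | nra]. }
  assert (8 * r0 * B1 <= 1).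
  { assert (0 <= r0 * B1 * B1) by (apply Rmult_le_pos; [apply Rmult_le_pos|]; lra).
    assert (64 * (r0 * B1 * B1) <= N * (r0 * B1 * B1)) by (apply Rmult_le_compat_r; lra).
    assert (r0 * B1 * 1 <= r0 * B1 * B1) by (apply Rmult_le_compat_l; [apply Rmult_le_pos|]; lra).
    lra. }
  nra.
Qed.

End Iterates.

End Orbit.

Lemma Qred_coprime (n : Z) (d : positive) : Z.gcd n (Zpos d) = 1%Z -> Qred (n # d) = (n # d)%Q.
Proof.
  intros Hg. unfold Qred.
  pose proof (Z.ggcd_correct_divisors n (Zpos d)) as Hc.
  pose proof (Z.ggcd_gcd n (Zpos d)) as Hg2.
  destruct (Z.ggcd n (Zpos d)) as [g [n' d']]. simpl in *.
  rewrite Hg in Hg2. subst g. destruct Hc as [H1 H2].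
  rewrite Z.mul_1_l in H1, H2. subst. reflexivity.
Qed.

Section Fraction.
Variables (p q : nat -> Z) (i : nat).
Hypothesis Hq : (0 < q i)%Z.

Lemma Q2R_ratQ : Q2R (ratQ p q i) = IZR (p i) / IZR (q i).
Proof. unfold ratQ, Q2R. simpl. rewrite Z2Pos.id by exact Hq. reflexivity. Qed.

Lemma mcf_den_ratQ : mcf_den (ratQ p q i) 1 = IZR (q i).
Proof. unfold mcf_den, ratQ. simpl. rewrite Z2Pos.id by exact Hq. reflexivity. Qed.

Hypothesis Hbound : (- (1 # 2) < ratQ p q i <= 1 # 2)%Q.

Lemma Q2R_ratQ_bounds : -/2 < Q2R (ratQ p q i) <= /2.
Proof.
  destruct Hbound as [H1 H2]. apply Qlt_Rlt in H1. apply Qle_Rle in H2.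
  replace (Q2R (- (1 # 2))) with (-/2) in H1 by (unfold Q2R; simpl; field).
  replace (Q2R (1 # 2)) with (/2) in H2 by (unfold Q2R; simpl; field).
  lra.
Qed.

Lemma mcf_q_ratQ mm : Z.gcd (p i) (q i) = 1%Z -> mcf_len (ratQ p q i) mm ->
  mcf_q (ratQ p q i) mm = q i.
Proof.
  intros Hg Hl. unfold mcf_q.
  rewrite (Qred_complete _ _ (mcf_trunc_len _ _ Q2R_ratQ_bounds Hl)).
  unfold ratQ. rewrite Qred_coprime; simpl; rewrite Z2Pos.id; auto.
Qed.

Lemma mcf_b1_le_q mm : mcf_len (ratQ p q i) mm -> (mcf_b (ratQ p q i) 1 <= q i)%Z.
Proof.
  intros Hl. assert (Hm : (1 <= 1 <= mm)%nat) by (destruct Hl; lia).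
  pose proof (mcf_den_bounds _ _ Q2R_ratQ_bounds Hl 1 Hm) as [HD _].
  rewrite mcf_den_ratQ in HD. pose proof (mcf_den_ge1 (ratQ p q i) 2).
  assert (Hb : 0 <= mcf_bR (ratQ p q i) 1) by (unfold mcf_bR, mcf_b; apply IZR_le; lia).
  assert (Hq1 : 1 <= IZR (q i)) by (apply IZR_le; lia).
  assert (Hlt : mcf_bR (ratQ p q i) 1 < IZR (q i) + 1).
  { destruct (Rle_dec (mcf_bR (ratQ p q i) 1) (/2)); [lra|].
    assert (0 <= (mcf_den (ratQ p q i) 2 - 1) * (mcf_bR (ratQ p q i) 1 - /2))
      by (apply Rmult_le_pos; lra).
    lra. }
  unfold mcf_bR in Hlt. rewrite <- plus_IZR in Hlt. apply lt_IZR in Hlt. lia.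
Qed.

End Fraction.

Lemma fold_right_mul_init (f : nat -> Z) l c :
  fold_right (fun i acc => (f i * acc)%Z) c l
  = (fold_right (fun i acc => (f i * acc)%Z) 1%Z l * c)%Z.
Proof. induction l as [|j l IH]; cbn [fold_right]; [ring | rewrite IH; ring]. Qed.

Lemma kseq_S p q m n : (1 <= n)%nat ->
  kseq p q m (S n) = (kseq p q m n * mcf_q (ratQ p q n) (m n))%Z.
Proof.
  intros H. unfold kseq. destruct n as [|n]; [lia|].
  replace (S (S n) - 1)%nat with (S n) by lia. replace (S n - 1)%nat with n by lia.
  rewrite seq_S, fold_right_app, (fold_right_mul_init (fun i => mcf_q (ratQ p q i) (m i))).
  cbn [fold_right]. change (1 + n)%nat with (S n). ring.
Qed.

Lemma kseq_ge1 p q m n : (1 <= kseq p q m n)%Z.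
Proof.
  unfold kseq. induction (seq 1 (n - 1)) as [|j l IH]; cbn [fold_right]; [lia|].
  assert (1 <= mcf_q (ratQ p q j) (m j))%Z by (unfold mcf_q; lia). nia.
Qed.

Section ClassQG.
Variables (N : Z) (p q : nat -> Z) (m : nat -> nat).
Hypothesis HQ : in_QG N p q m.

Lemma QG_q_pos j : (1 <= j)%nat -> (0 < q j)%Z.
Proof. intros H. destruct HQ as [HQ1 _]. apply (HQ1 j H). Qed.

Lemma QG_len_ge1 j : (1 <= j)%nat -> (1 <= m j)%nat.
Proof. intros H. destruct HQ as [HQ1 _]. destruct (HQ1 j H) as [_ [_ [_ [_ [Hm _]]]]]. exact Hm. Qed.

Lemma QG_mcf_q j : (1 <= j)%nat -> mcf_q (ratQ p q j) (m j) = q j.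
Proof.
  intros H. destruct HQ as [HQ1 _]. destruct (HQ1 j H) as [Hq [Hg [_ [Hb Hl]]]].
  apply mcf_q_ratQ; assumption.
Qed.

Lemma QG_b1_le_q j : (1 <= j)%nat -> (mcf_b (ratQ p q j) 1 <= q j)%Z.
Proof.
  intros H. destruct HQ as [HQ1 _]. destruct (HQ1 j H) as [Hq [_ [_ [Hb Hl]]]].
  exact (mcf_b1_le_q p q j Hq Hb (m j) Hl).
Qed.

Lemma QG_b1_next j : (1 <= j)%nat -> (q j ^ 2 <= mcf_b (ratQ p q (S j)) 1)%Z.
Proof.
  intros H. destruct HQ as [_ [_ [HQ3 _]]]. rewrite <- QG_mcf_q by exact H. exact (HQ3 j H).
Qed.

Lemma QG_b1_ge_N j : (1 <= j)%nat -> (N <= mcf_b (ratQ p q j) 1)%Z.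
Proof.
  induction j as [|[|j] IH]; intros H; [lia | destruct HQ as [_ [HQ2 _]]; exact HQ2 |].
  specialize (IH ltac:(lia)). pose proof (QG_b1_next (S j) ltac:(lia)).
  pose proof (QG_b1_le_q (S j) ltac:(lia)). pose proof (QG_q_pos (S j) ltac:(lia)). nia.
Qed.

Lemma QG_kseq_S_le j : (1 <= j)%nat -> (N * kseq p q m (S j) <= q j ^ 2)%Z.
Proof.
  induction j as [|[|j] IH]; intros H; [lia| |];
    rewrite kseq_S, QG_mcf_q by lia.
  - change (kseq p q m 1) with 1%Z.
    pose proof (QG_b1_ge_N 1 ltac:(lia)). pose proof (QG_b1_le_q 1 ltac:(lia)).
    pose proof (QG_q_pos 1 ltac:(lia)). nia.
  - specialize (IH ltac:(lia)). pose proof (QG_b1_next (S j) ltac:(lia)).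
    pose proof (QG_b1_le_q (S (S j)) ltac:(lia)).
    pose proof (QG_q_pos (S j) ltac:(lia)). pose proof (QG_q_pos (S (S j)) ltac:(lia)). nia.
Qed.

Lemma QG_kseq_le_b1 i : (1 <= i)%nat -> (N * kseq p q m i <= mcf_b (ratQ p q i) 1)%Z.
Proof.
  intros H. destruct i as [|[|i]]; [lia | change (kseq p q m 1) with 1%Z |].
  - pose proof (QG_b1_ge_N 1 ltac:(lia)). lia.
  - pose proof (QG_kseq_S_le (S i) ltac:(lia)). pose proof (QG_b1_next (S i) ltac:(lia)). lia.
Qed.

End ClassQG.

Lemma ln2_div_2PI_bounds : 0 < ln 2 / (2 * PI) <= 1.
Proof.
  pose proof ln_lt_2. pose proof PI2_1.
  assert (Hln : ln 2 < 2).
  { rewrite <- (ln_exp 2) at 2. apply ln_increasing; [lra|].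
    pose proof (exp_ineq1 2 ltac:(lra)). lra. }
  split; [apply Rdiv_lt_0_compat; lra|].
  apply Rmult_le_reg_r with (2 * PI); [lra|].
  replace (ln 2 / (2 * PI) * (2 * PI)) with (ln 2) by (field; lra). lra.
Qed.

Lemma exists_Z_ge_64_div_le r : 0 < r -> exists N : Z, (64 <= N)%Z /\ 10 / IZR N <= r.
Proof.
  intros Hr. exists (Z.max 64 (up (10 / r))). split; [lia|].
  set (N := Z.max 64 (up (10 / r))).
  assert (HN : 10 / r <= IZR N).
  { destruct (archimed (10 / r)) as [Hup _].
    assert (IZR (up (10 / r)) <= IZR N) by (apply IZR_le; unfold N; lia). lra. }
  assert (HN64 : 64 <= IZR N) by (apply IZR_le; unfold N; lia).
  apply Rmult_le_reg_l with (IZR N / r); [apply Rdiv_lt_0_compat; lra|].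
  replace (IZR N / r * (10 / IZR N)) with (10 / r) by (field; lra).
  replace (IZR N / r * r) with (IZR N) by (field; lra). exact HN.
Qed.

Lemma QG_orbit N p q m (HQ : in_QG N p q m) (HN : (64 <= N)%Z) i z : (1 <= i)%nat ->
  tangent_disk (IZR (p i) / IZR (q i))
               (ln 2 / (2 * PI) * (IZR (kseq p q m i) / IZR (q i))) z ->
  forall n, (S n <= m i)%nat ->
    Cmod (Giter n z) <= 10 / IZR N /\
    ((S (S n) <= m i)%nat ->
     Re (Giter n z) <> 0 /\ Rabs (Im (Giter n z)) <= Rabs (Re (Giter n z))).
Proof.
  intros Hi Hz n Hn.
  pose proof HQ as [HQ1 [_ [_ HQ4]]]. destruct (HQ1 i Hi) as [Hq [_ [_ [Hb Hl]]]].
  set (x := ratQ p q i) in *. set (k := IZR (kseq p q m i)).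
  set (c := ln 2 / (2 * PI)) in *.
  pose proof (Q2R_ratQ_bounds p q i Hb) as Hx.
  pose proof ln2_div_2PI_bounds as Hc.
  assert (HN' : 64 <= IZR N) by (apply IZR_le; exact HN).
  assert (Hk : 1 <= k) by (apply IZR_le, kseq_ge1).
  assert (HNk : IZR N * k <= mcf_bR x 1).
  { unfold mcf_bR, k. rewrite <- mult_IZR. apply IZR_le, (QG_kseq_le_b1 N p q m HQ i Hi). }
  assert (Hgrow : forall j, (1 <= j)%nat -> (j + 1 <= m i)%nat ->
            mcf_bR x j * mcf_bR x j <= mcf_bR x (S j)).
  { intros j Hj1 Hj2. unfold mcf_bR. rewrite <- mult_IZR. apply IZR_le.
    rewrite <- Z.pow_2_r. apply HQ4; lia. }
  assert (Hz' : tangent_disk (mcf_xR x 1) (orbit_radius x c k 0) z).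
  { unfold mcf_xR, orbit_radius. change (mcf_x x 1) with x. unfold x.
    rewrite (Q2R_ratQ p q i Hq), (mcf_den_ratQ p q i Hq).
    assert (0 < IZR (q i)) by (apply IZR_lt; exact Hq).
    replace (c * k * IZR (q i) / (IZR (q i) * IZR (q i))) with (c * (k / IZR (q i)))
      by (field; lra).
    exact Hz. }
  split.
  - exact (Giter_Cmod_le x (m i) (IZR N) k c Hx Hl HN' Hk HNk Hc Hgrow z Hz' n Hn).
  - exact (Giter_cone x (m i) (IZR N) k c Hx Hl HN' Hk HNk Hc Hgrow z Hz' n).
Qed.

Close Scope R_scope.

Theorem proposition6p7 :
  forall r : R, (0 < r < /2)%R ->
  exists N : Z, (2 <= N)%Z /\
  forall (p q : nat -> Z) (m : nat -> nat),
    in_QG N p q m ->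
    forall (i : nat) (z : C), (1 <= i)%nat ->
      let rho := (ln 2 / (2 * PI) * (IZR (kseq p q m i) / IZR (q i)))%R in
      (Cmod (Cminus z (IZR (p i) / IZR (q i), (- rho)%R)) <= rho)%R ->
      (forall n : nat, (n + 2 <= m i)%nat ->
         (Cmod (Giter n z) <= r)%R /\
         ((0 < Re (Giter n z))%R -> arg_in (Giter n z) (- (PI / 4)) (PI / 4)) /\
         ((Re (Giter n z) < 0)%R -> arg_in (Giter n z) (3 * PI / 4) (5 * PI / 4))) /\
      (Cmod (Giter (m i - 1) z) <= r)%R.
Proof.
  intros r Hr.
  destruct (exists_Z_ge_64_div_le r ltac:(lra)) as [N [HN HNr]].
  exists N. split; [lia|].
  intros p q m HQ i z Hi rho Hz.
  pose proof (QG_orbit N p q m HQ HN i z Hi (Cmod_le_tangent_disk _ _ _ Hz)) as Horbit.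
  split.
  - intros n Hn. destruct (Horbit n ltac:(lia)) as [Hmod Hcone].
    destruct (Hcone ltac:(lia)) as [Hre Him].
    split; [lra | exact (arg_in_cone _ Hre Him)].
  - pose proof (QG_len_ge1 N p q m HQ i Hi).
    destruct (Horbit (m i - 1)%nat ltac:(lia)) as [Hmod _]. lra.
Qed.
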